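(* For a locally compact metrizable topological group $G$, $G$ is NSS if and only if $G$ is TAP.
   Context: $e$ is the neutral element; $\prod_{k=1}^n a_k=a_1\cdots a_n$. $G$ is NSS if some neighborhood of $e$ contains no nontrivial subgroup of $G$. A sequence $(g_n)$ in $G$ is hyper-multipliable if for every integer sequence $(m_n)$ the sequence $\left(\prod_{k=1}^n g_k^{m_k}\right)_n$ converges in $G$. A subset $A\subset G$ is absolutely productive if every sequence of pairwise distinct elements of $A$ is hyper-multipliable. $G$ is TAP if every absolutely productive subset of $G$ is finite. *)

From Stdlib Require Import Reals ZArith List Classical.
Open Scope R_scope.

Section TopGroup.
Context {G : Type} (mul : G -> G -> G) (inv : G -> G) (e : G)
        (opn : (G -> Prop) -> Prop).

Definition is_group : Prop :=
  (forall x y z, mul x (mul y z) = mul (mul x y) z) /\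
  (forall x, mul e x = x) /\ (forall x, mul x e = x) /\
  (forall x, mul (inv x) x = e) /\ (forall x, mul x (inv x) = e).

Definition is_topology : Prop :=
  opn (fun _ => True) /\ opn (fun _ => False) /\
  (forall U V, opn U -> opn V -> opn (fun x => U x /\ V x)) /\
  (forall F : (G -> Prop) -> Prop, (forall U, F U -> opn U) ->
     opn (fun x => exists U, F U /\ U x)).

(* continuity of multiplication G x G -> G (product topology) and inversion *)
Definition is_topological_group : Prop :=
  is_group /\ is_topology /\
  (forall x y W, opn W -> W (mul x y) ->
     exists U V, opn U /\ opn V /\ U x /\ V y /\
       (forall u v, U u -> V v -> W (mul u v))) /\
  (forall W, opn W -> opn (fun x => W (inv x))).

Definition is_metric (d : G -> G -> R) : Prop :=
  (forall x y, 0 <= d x y) /\ (forall x y, d x y = 0 <-> x = y) /\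
  (forall x y, d x y = d y x) /\
  (forall x y z, d x z <= d x y + d y z).

Definition metrizable : Prop :=
  exists d : G -> G -> R, is_metric d /\
    forall U, opn U <-> (forall x, U x -> exists eps, 0 < eps /\
                            forall y, d x y < eps -> U y).

Definition nbhd (x : G) (V : G -> Prop) : Prop :=
  exists U, opn U /\ U x /\ forall y, U y -> V y.

Definition compact (K : G -> Prop) : Prop :=
  forall F : (G -> Prop) -> Prop, (forall U, F U -> opn U) ->
    (forall x, K x -> exists U, F U /\ U x) ->
    exists l : list (G -> Prop), (forall U, In U l -> F U) /\
      (forall x, K x -> exists U, In U l /\ U x).

Definition locally_compact : Prop :=
  forall x, exists K, compact K /\ nbhd x K.

Definition is_subgroup (H : G -> Prop) : Prop :=
  H e /\ (forall x y, H x -> H y -> H (mul x y)) /\ (forall x, H x -> H (inv x)).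

Definition NSS : Prop :=
  exists V, nbhd e V /\
    forall H, is_subgroup H -> (forall x, H x -> V x) -> forall x, H x -> x = e.

Definition converges (s : nat -> G) (x : G) : Prop :=
  forall U, opn U -> U x -> exists N, forall n, (N <= n)%nat -> U (s n).

Fixpoint gpow (g : G) (n : nat) : G :=
  match n with O => e | S n => mul (gpow g n) g end.

Definition zpow (g : G) (m : Z) : G :=
  match m with
  | Z0 => e
  | Zpos p => gpow g (Pos.to_nat p)
  | Zneg p => inv (gpow g (Pos.to_nat p))
  end.

Fixpoint oprod (a : nat -> G) (n : nat) : G :=
  match n with O => e | S n => mul (oprod a n) (a n) end.

(* sequences are indexed from 0: the n-th partial product (n >= 1) is
   oprod (fun k => zpow (g k) (m k)) n = g_0^{m_0} ... g_(n-1)^{m_(n-1)} *)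
Definition hyper_multipliable (g : nat -> G) : Prop :=
  forall m : nat -> Z, exists x,
    converges (fun n => oprod (fun k => zpow (g k) (m k)) n) x.

Definition absolutely_productive (A : G -> Prop) : Prop :=
  forall g : nat -> G, (forall n, A (g n)) ->
    (forall i j, g i = g j -> i = j) -> hyper_multipliable g.

Definition finite_set (A : G -> Prop) : Prop :=
  exists l : list G, forall x, A x -> In x l.

Definition TAP : Prop :=
  forall A, absolutely_productive A -> finite_set A.

End TopGroup.

From Pilot Require Import Defs.
From Stdlib Require Import Reals ZArith List Classical Lia Lra ClassicalEpsilon FinFun.

(* NSS -> TAP.  Let U be an open neighbourhood of e containing no nontrivial
   subgroup, and let (g_n) be an injective sequence in an absolutely productive
   set.  Choose exponents m_n with g_n^(m_n) outside U whenever some power of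
   g_n is.  The products g_0^(m_0)...g_n^(m_n) converge, so their consecutive
   quotients g_n^(m_n) eventually lie in U; hence eventually the whole cyclic
   group of g_n lies in U, i.e. g_n = e, contradicting injectivity.

   TAP -> NSS.  If G is not NSS, we build a "filtration": open neighbourhoods
   W_0 ⊇ W_1 ⊇ ... of e with W_(n+1)^3 ⊆ W_n, W_0 inside a compact set and W_n
   metrically shrinking, and elements h_n <> e whose cyclic groups lie in
   W_(n+1), chosen so that the h_n are distinct.  Any product of elements taken
   from distinct levels > J lies in W_J ([level_product]).  Hence for every
   injective sequence in {h_n} and every choice of exponents the partial
   products stay in the compact set W_0 (so they have a cluster point) and are
   Cauchy on the right; they therefore converge.  So {h_n} is an infinite
   absolutely productive set, and G is not TAP. *)

Lemma infinite_injective_seq {T : Type} (A : T -> Prop) : ~ finite_set A ->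
  exists g : nat -> T, (forall n, A (g n)) /\ (forall i j, g i = g j -> i = j).
Proof.
  intro Hnf.
  assert (Hnew : forall l : list T, exists x, A x /\ ~ In x l).
  { intro l. apply NNPP. intro Hn. apply Hnf. exists l. intros x Hx.
    apply NNPP. intro Hi. apply Hn. exists x. auto. }
  destruct (choice _ Hnew) as [c Hc].
  set (L := fix L n := match n with O => nil | S n => c (L n) :: L n end).
  exists (fun n => c (L n)). split.
  - intro n. apply Hc.
  - assert (Hin : forall i j, (i < j)%nat -> In (c (L i)) (L j)).
    { intros i j Hij. induction Hij; simpl; auto. }
    intros i j Hij. destruct (Nat.lt_total i j) as [H|[H|H]]; auto.
    + exfalso. apply (proj2 (Hc (L j))). rewrite <- Hij. auto.
    + exfalso. apply (proj2 (Hc (L i))). rewrite Hij. auto.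
Qed.

Lemma injective_eventually_large (s : nat -> nat) :
  (forall i j, s i = s j -> i = j) ->
  forall J, exists N, forall i, (N <= i)%nat -> (J <= s i)%nat.
Proof.
  intros Hs J. induction J as [|J [N HN]].
  - exists 0%nat. intros; lia.
  - destruct (classic (exists i0, s i0 = J)) as [[i0 Hi0]|Hn].
    + exists (Nat.max N (S i0)). intros i Hi.
      assert (J <= s i)%nat by (apply HN; lia).
      assert (s i <> J) by (intro E; assert (i = i0) by (apply Hs; congruence); lia).
      lia.
    + exists N. intros i Hi. assert (J <= s i)%nat by (apply HN; lia).
      assert (s i <> J) by (intro E; apply Hn; eauto). lia.
Qed.

Lemma list_upper_bound (l : list nat) : exists B, forall x, In x l -> (x <= B)%nat.
Proof.
  induction l as [|a l [B HB]]; [exists 0%nat; simpl; tauto|].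
  exists (Nat.max a B). intros x [<-|Hx]; [lia|]. specialize (HB x Hx). lia.
Qed.

Section Group.
Context {G : Type} (mul : G -> G -> G) (inv : G -> G) (e : G).
Hypothesis Hg : is_group mul inv e.

Local Notation gpow := (gpow mul e).
Local Notation zpow := (zpow mul inv e).

Lemma mul_assoc x y z : mul x (mul y z) = mul (mul x y) z.
Proof. apply Hg. Qed.
Lemma mul_e_l x : mul e x = x.
Proof. apply Hg. Qed.
Lemma mul_e_r x : mul x e = x.
Proof. apply Hg. Qed.
Lemma mul_inv_l x : mul (inv x) x = e.
Proof. apply Hg. Qed.
Lemma mul_inv_r x : mul x (inv x) = e.
Proof. apply Hg. Qed.

Lemma inv_cancel_l a b : mul (inv a) (mul a b) = b.
Proof. rewrite mul_assoc, mul_inv_l, mul_e_l. reflexivity. Qed.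

Lemma inv_cancel_r a b : mul a (mul (inv a) b) = b.
Proof. rewrite mul_assoc, mul_inv_r, mul_e_l. reflexivity. Qed.

Lemma inv_unique c x : mul c x = e -> c = inv x.
Proof.
  intro H. rewrite <- (mul_e_r c), <- (mul_inv_r x), mul_assoc, H, mul_e_l.
  reflexivity.
Qed.

Lemma inv_mul a b : inv (mul a b) = mul (inv b) (inv a).
Proof.
  symmetry. apply inv_unique.
  rewrite <- mul_assoc, inv_cancel_l, mul_inv_l. reflexivity.
Qed.

Lemma inv_e : inv e = e.
Proof. symmetry. apply inv_unique, mul_e_l. Qed.

Lemma inv_inv x : inv (inv x) = x.
Proof. symmetry. apply inv_unique, mul_inv_r. Qed.

Lemma gpow_comm g n : mul (gpow g n) g = mul g (gpow g n).
Proof.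
  induction n as [|n IH]; simpl; [rewrite mul_e_l, mul_e_r; reflexivity|].
  rewrite IH at 1. symmetry. apply mul_assoc.
Qed.

Definition cyclic_set (g y : G) : Prop :=
  exists n, y = gpow g n \/ y = inv (gpow g n).

Lemma cyclic_set_mul_g g y : cyclic_set g y -> cyclic_set g (mul y g).
Proof.
  intros [n [->| ->]].
  - exists (S n). left. reflexivity.
  - destruct n as [|k].
    + exists 1%nat. left. simpl. rewrite inv_e. reflexivity.
    + exists k. right. simpl.
      rewrite gpow_comm, inv_mul, <- mul_assoc, mul_inv_l, mul_e_r. reflexivity.
Qed.

Lemma cyclic_set_mul_inv_g g y : cyclic_set g y -> cyclic_set g (mul y (inv g)).
Proof.
  intros [n [->| ->]].
  - destruct n as [|k].
    + exists 1%nat. right. simpl. rewrite !mul_e_l. reflexivity.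
    + exists k. left. simpl. rewrite <- mul_assoc, mul_inv_r, mul_e_r. reflexivity.
  - exists (S n). right. simpl. rewrite gpow_comm, inv_mul. reflexivity.
Qed.

Lemma cyclic_set_subgroup g : is_subgroup mul inv e (cyclic_set g).
Proof.
  split; [|split].
  - exists 0%nat. left. reflexivity.
  - intros x y Hx [n [->| ->]]; revert x Hx; induction n as [|n IH]; intros x Hx;
      simpl; rewrite ?inv_e, ?mul_e_r; auto.
    + rewrite mul_assoc. apply cyclic_set_mul_g, IH, Hx.
    + rewrite inv_mul, mul_assoc. apply IH, cyclic_set_mul_inv_g, Hx.
  - intros x [n [->| ->]]; exists n; [right|left]; [reflexivity|apply inv_inv].
Qed.

Lemma cyclic_set_zpow g y : cyclic_set g y -> exists z, y = zpow g z.
Proof.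
  intros [[|k] [->| ->]].
  - exists 0%Z. reflexivity.
  - exists 0%Z. simpl. apply inv_e.
  - exists (Z.pos (Pos.of_succ_nat k)). simpl. rewrite SuccNat2Pos.id_succ. reflexivity.
  - exists (Z.neg (Pos.of_succ_nat k)). simpl. rewrite SuccNat2Pos.id_succ. reflexivity.
Qed.

Lemma subgroup_zpow H g z : is_subgroup mul inv e H -> H g -> H (zpow g z).
Proof.
  intros [H1 [H2 H3]] Hg0.
  assert (Hn : forall n, H (gpow g n)) by (induction n; simpl; auto).
  destruct z; simpl; auto.
Qed.

Lemma no_subgroup_iff_no_cyclic (V : G -> Prop) :
  (forall H, is_subgroup mul inv e H -> (forall x, H x -> V x) ->
     forall x, H x -> x = e) <->
  (forall h, (forall z, V (zpow h z)) -> h = e).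
Proof.
  split.
  - intros Hsub h Hh. apply (Hsub (cyclic_set h)).
    + apply cyclic_set_subgroup.
    + intros y Hy. destruct (cyclic_set_zpow h y Hy) as [z ->]. apply Hh.
    + exists 1%nat. left. simpl. symmetry. apply mul_e_l.
  - intros Hcyc H HH HV x Hx. apply Hcyc. intro z. apply HV, subgroup_zpow; auto.
Qed.

Definition lprod : list G -> G := fold_right mul e.

Lemma lprod_app l1 l2 : lprod (l1 ++ l2) = mul (lprod l1) (lprod l2).
Proof.
  induction l1 as [|a l IH]; simpl; [rewrite mul_e_l; reflexivity|].
  rewrite IH. apply mul_assoc.
Qed.

Lemma oprod_split (f : nat -> G) k n :
  oprod mul e f (k + n) = mul (oprod mul e f k) (lprod (map f (seq k n))).
Proof.
  induction n as [|n IH].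
  - simpl. rewrite Nat.add_0_r, mul_e_r. reflexivity.
  - rewrite Nat.add_succ_r, seq_S, map_app, lprod_app. simpl.
    rewrite IH, mul_e_r, mul_assoc. reflexivity.
Qed.

(* Any product of elements carrying pairwise distinct levels
   l > J, each element of level l lying in W_l, lies in W_J: split the product
   at the (unique) factor of level J+1, if any. *)
Section LevelProduct.
Variable W : nat -> G -> Prop.
Hypothesis W_e : forall n, W n e.
Hypothesis W_cube : forall n a b c, W (S n) a -> W (S n) b -> W (S n) c ->
  W n (mul a (mul b c)).

Lemma level_decreasing n x : W (S n) x -> W n x.
Proof. intro Hx. rewrite <- (mul_e_r x), <- (mul_e_r e). apply W_cube; auto. Qed.

Lemma level_antitone m n x : (n <= m)%nat -> W m x -> W n x.
Proof. induction 1; auto using level_decreasing. Qed.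

Lemma level_product_bounded M : forall J (l : list (nat * G)),
  NoDup (map fst l) ->
  (forall p, In p l -> (J < fst p <= J + M)%nat /\ W (fst p) (snd p)) ->
  W J (lprod (map snd l)).
Proof.
  induction M as [|M IH]; intros J l Hnd Hl.
  - destruct l as [|p l]; [apply W_e|].
    destruct (Hl p) as [H _]; simpl; auto. lia.
  - destruct (classic (exists x, In (S J, x) l)) as [[x Hx]|Hn].
    + destruct (in_split _ _ Hx) as [L [R ->]].
      rewrite map_app in Hnd. simpl in Hnd.
      pose proof (NoDup_remove_2 _ _ _ Hnd) as Hfresh.
      apply NoDup_remove_1 in Hnd.
      assert (Hlevel : forall p, In p (L ++ R) -> (S J < fst p <= S J + M)%nat /\
                                  W (fst p) (snd p)).
      { intros p Hp. destruct (Hl p) as [Hb HW].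
        { apply in_app_or in Hp. apply in_or_app. simpl. tauto. }
        split; auto. enough (fst p <> S J) by lia. intro E. apply Hfresh.
        rewrite <- map_app, <- E. apply in_map, Hp. }
      rewrite map_app, lprod_app. simpl. apply W_cube.
      * apply IH; [eapply NoDup_app_remove_r; eauto|].
        intros p Hp. apply Hlevel, in_or_app; auto.
      * apply (Hl (S J, x)), in_or_app. simpl. auto.
      * apply IH; [eapply NoDup_app_remove_l; eauto|].
        intros p Hp. apply Hlevel, in_or_app; auto.
    + apply level_decreasing, IH; auto.
      intros p Hp. destruct (Hl p Hp) as [H1 H2]. split; auto.
      enough (fst p <> S J) by lia.
      intro E. apply Hn. exists (snd p). rewrite <- E. destruct p; auto.
Qed.

Lemma level_product J (l : list (nat * G)) :
  NoDup (map fst l) ->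
  (forall p, In p l -> (J < fst p)%nat /\ W (fst p) (snd p)) ->
  W J (lprod (map snd l)).
Proof.
  intros Hnd Hl. destruct (list_upper_bound (map fst l)) as [B HB].
  apply (level_product_bounded B); auto.
  intros p Hp. destruct (Hl p Hp) as [H1 H2]. split; auto.
  specialize (HB (fst p) (in_map _ _ _ Hp)). lia.
Qed.

End LevelProduct.
End Group.

Section TopologicalGroup.
Context {G : Type} (mul : G -> G -> G) (inv : G -> G) (e : G)
        (opn : (G -> Prop) -> Prop).
Hypothesis Htg : is_topological_group mul inv e opn.

Let Hg : is_group mul inv e := proj1 Htg.
Let Htop : is_topology opn := proj1 (proj2 Htg).
Let mul_continuous := proj1 (proj2 (proj2 Htg)).
Let inv_continuous := proj2 (proj2 (proj2 Htg)).

Local Notation zpow := (zpow mul inv e).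

Lemma open_and U V : opn U -> opn V -> opn (fun x => U x /\ V x).
Proof. intros. apply Htop; auto. Qed.

Lemma square_nbhd W : opn W -> W e -> exists W1, opn W1 /\ W1 e /\
  forall a b, W1 a -> W1 b -> W (mul a b).
Proof.
  intros HW He.
  destruct (mul_continuous e e W HW) as [U [V [HU [HV [HUe [HVe HUV]]]]]].
  { rewrite (mul_e_l _ _ _ Hg). auto. }
  exists (fun x => U x /\ V x). split; [apply open_and; auto|].
  split; auto. intros a b [Ha _] [_ Hb]. auto.
Qed.

Lemma cube_nbhd W : opn W -> W e -> exists W1, opn W1 /\ W1 e /\
  forall a b c, W1 a -> W1 b -> W1 c -> W (mul a (mul b c)).
Proof.
  intros HW He.
  destruct (square_nbhd W HW He) as [W1 [HW1 [HW1e H1]]].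
  destruct (square_nbhd W1 HW1 HW1e) as [W2 [HW2 [HW2e H2]]].
  exists W2. repeat split; auto.
  intros a b c Ha Hb Hc. apply H1; auto. rewrite <- (mul_e_r _ _ _ Hg a). auto.
Qed.

Lemma convergent_product_factors (f : nat -> G) x U : 
  converges opn (oprod mul e f) x -> opn U -> U e ->
  exists N, forall n, (N <= n)%nat -> U (f n).
Proof.
  intros Hc HU He.
  destruct (mul_continuous (inv x) x U HU) as [A [B [HA [HB [HAx [HBx HAB]]]]]].
  { rewrite (mul_inv_l _ _ _ Hg). auto. }
  destruct (Hc (fun y => A (inv y) /\ B y)) as [N HN].
  { apply open_and; auto. }
  { auto. }
  exists N. intros n Hn. rewrite <- (inv_cancel_l _ _ _ Hg (oprod mul e f n) (f n)).
  apply HAB; [apply (HN n Hn)|apply (HN (S n)); lia].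
Qed.

Theorem NSS_TAP : NSS mul inv e opn -> TAP mul inv e opn.
Proof.
  intros [V [[U [HU [HUe HUV]]] Hsub]] A HA.
  rewrite no_subgroup_iff_no_cyclic in Hsub by exact Hg.
  apply NNPP. intro Hnf.
  destruct (infinite_injective_seq A Hnf) as [g [HgA Hginj]].
  assert (Hexp : forall n, exists z, ~ U (zpow (g n) z) \/ forall z', U (zpow (g n) z')).
  { intro n. destruct (classic (forall z', U (zpow (g n) z'))) as [H|H]; [exists 0%Z; auto|].
    apply not_all_ex_not in H. destruct H as [z Hz]. exists z. auto. }
  destruct (choice _ Hexp) as [m Hm].
  destruct (HA g HgA Hginj m) as [x Hx].
  destruct (convergent_product_factors _ x U Hx HU HUe) as [N HN].
  assert (Htriv : forall n, (N <= n)%nat -> g n = e).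
  { intros n Hn. apply Hsub. intro z. apply HUV.
    destruct (Hm n) as [H|H]; [exfalso; apply H, (HN n Hn)|apply H]. }
  enough (N = S N) by lia.
  apply Hginj. rewrite !Htriv; auto.
Qed.

Lemma compact_cluster_point (K : G -> Prop) (p : nat -> G) :
  Defs.compact opn K -> (forall n, K (p n)) ->
  exists x, forall U, opn U -> U x -> forall N, exists n, (N <= n)%nat /\ U (p n).
Proof.
  intros HK HpK. apply NNPP. intro Hn.
  set (Far := fun U => opn U /\ exists N, forall n, (N <= n)%nat -> ~ U (p n)).
  destruct (HK Far) as [l [Hl1 Hl2]].
  - intros U [HU _]. auto.
  - intros x _. apply NNPP. intro Hx. apply Hn. exists x.
    intros U HU HUx N. apply NNPP. intro HN. apply Hx. exists U.
    repeat split; auto. exists N. intros n Hn' HUn. apply HN. eauto.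
  - assert (Hb : exists N, forall U, In U l -> forall n, (N <= n)%nat -> ~ U (p n)).
    { clear Hl2. induction l as [|U l IH]; [exists 0%nat; simpl; tauto|].
      destruct IH as [N HN]; [intros; apply Hl1; simpl; auto|].
      destruct (Hl1 U) as [_ [N' HN']]; [simpl; auto|].
      exists (Nat.max N N'). intros V [<-|HV] n Hnn; [apply HN'|apply (HN V HV)]; lia. }
    destruct Hb as [N HN].
    destruct (Hl2 (p N) (HpK N)) as [U [HUl HU]].
    exact (HN U HUl N (le_n N) HU).
Qed.

Section Metric.
Variable d : G -> G -> R.
Hypothesis Hd : is_metric d.
Hypothesis Hmo : forall U, opn U <->
  (forall x, U x -> exists eps, 0 < eps /\ forall y, d x y < eps -> U y).

Lemma ball_open r : opn (fun y => d e y < r).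
Proof.
  apply Hmo. intros x Hx. exists (r - d e x). split; [lra|].
  intros y Hy. destruct Hd as [_ [_ [_ Htri]]]. specialize (Htri e x y). lra.
Qed.

Lemma cauchy_cluster_converges (p : nat -> G) x :
  (forall U, opn U -> U x -> forall N, exists n, (N <= n)%nat /\ U (p n)) ->
  (forall eps, 0 < eps -> exists N, forall k n, (N <= k <= n)%nat ->
     d e (mul (inv (p k)) (p n)) < eps) ->
  converges opn p x.
Proof.
  intros Hcl Hcauchy U HU HUx.
  destruct (mul_continuous x e U HU) as [A [B [HA [HB [HAx [HBe HAB]]]]]].
  { rewrite (mul_e_r _ _ _ Hg). auto. }
  destruct (proj1 (Hmo B) HB e HBe) as [eps [Heps Hball]].
  destruct (Hcauchy eps Heps) as [N HN].
  destruct (Hcl A HA HAx N) as [k [Hk HpA]].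
  exists k. intros n Hn. rewrite <- (inv_cancel_r _ _ _ Hg (p k) (p n)).
  apply HAB, Hball, HN; auto.
Qed.

(* The data extracted from the failure of NSS: neighbourhoods W_n of e with
   W_(n+1)^3 ⊆ W_n and W_(n+1) inside the ball of radius 1/(n+1), and
   elements h_n whose cyclic groups lie in W_(n+1) while W_(n+2) stays closer
   to e than h_n. *)
Record filtration (W : nat -> G -> Prop) (h : nat -> G) : Prop := {
  filt_e : forall n, W n e;
  filt_cube : forall n a b c, W (S n) a -> W (S n) b -> W (S n) c ->
    W n (mul a (mul b c));
  filt_small : forall n y, W (S n) y -> d e y < / INR (S n);
  filt_sep : forall n y, W (S (S n)) y -> d e y < d e (h n);
  filt_pow : forall n z, W (S n) (zpow (h n) z) }.

Section Filtration.
Variables (W : nat -> G -> Prop) (h : nat -> G) (K : G -> Prop).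
Hypothesis Hfilt : filtration W h.
Hypothesis HK : Defs.compact opn K.
Hypothesis HWK : forall y, W 0%nat y -> K y.

(* The h_n are distinct: for i < j, h_j lies in W_(i+2), which is closer to e
   than h_i. *)
Lemma filtration_injective i j : h i = h j -> i = j.
Proof.
  assert (Hlt : forall i j, (i < j)%nat -> h i <> h j).
  { intros i' j' Hij E.
    assert (Hj : W (S (S i')) (h j')).
    { apply (level_antitone _ _ _ Hg W (filt_e _ _ Hfilt) (filt_cube _ _ Hfilt) (S j'));
        [lia|].
      specialize (filt_pow _ _ Hfilt j' 1%Z). simpl. rewrite (mul_e_l _ _ _ Hg). auto. }
    pose proof (filt_sep _ _ Hfilt i' _ Hj). rewrite E in *. lra. }
  intro E. destruct (Nat.lt_total i j) as [H|[H|H]]; auto;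
    exfalso; [apply (Hlt i j)|apply (Hlt j i)]; auto.
Qed.

Lemma filtration_tail (s : nat -> nat) (m : nat -> Z) k n J :
  (forall i j, s i = s j -> i = j) -> (forall i, (k <= i)%nat -> (J <= s i)%nat) ->
  W J (lprod mul e (map (fun i => zpow (h (s i)) (m i)) (seq k n))).
Proof.
  intros Hs HJ.
  replace (map (fun i => zpow (h (s i)) (m i)) (seq k n))
    with (map snd (map (fun i => (S (s i), zpow (h (s i)) (m i))) (seq k n)))
    by (rewrite map_map; reflexivity).
  apply (level_product _ _ _ Hg W (filt_e _ _ Hfilt) (filt_cube _ _ Hfilt)).
  - rewrite map_map. apply Injective_map_NoDup; [|apply seq_NoDup].
    intros a b E. apply Hs. simpl in E. lia.
  - intros q Hq. apply in_map_iff in Hq. destruct Hq as [i [<- Hi]].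
    apply in_seq in Hi. simpl. split; [specialize (HJ i (proj1 Hi)); lia|].
    apply (filt_pow _ _ Hfilt).
Qed.

(* {h_n} is absolutely productive: the partial products of any injective
   sequence of h's with exponents lie in W_0 ⊆ K, so they cluster, and their
   right quotients are tails lying in W_(j+1) for large indices, so they are
   Cauchy. *)
Lemma filtration_absolutely_productive :
  absolutely_productive mul inv e opn (fun x => exists j, x = h j).
Proof.
  intros g HgA Hginj m.
  destruct (choice _ HgA) as [s Hs].
  assert (Hsinj : forall i j, s i = s j -> i = j).
  { intros i j E. apply Hginj. rewrite (Hs i), (Hs j), E. reflexivity. }
  set (f := fun k => zpow (g k) (m k)).
  assert (Hf : forall k, f k = zpow (h (s k)) (m k)) by (intro k; unfold f; rewrite Hs; auto).
  assert (Htail : forall k n, mul (inv (oprod mul e f k)) (oprod mul e f (k + n)) =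
                              lprod mul e (map (fun i => zpow (h (s i)) (m i)) (seq k n))).
  { intros k n. rewrite (oprod_split _ _ _ Hg), (inv_cancel_l _ _ _ Hg).
    f_equal. apply map_ext. auto. }
  assert (Hbounded : forall n, K (oprod mul e f n)).
  { intro n. apply HWK. replace (oprod mul e f n) with (oprod mul e f (0 + n)) by auto.
    rewrite (oprod_split _ _ _ Hg). simpl. rewrite (mul_e_l _ _ _ Hg).
    erewrite map_ext by apply Hf. apply filtration_tail; auto. intros; lia. }
  destruct (compact_cluster_point K (oprod mul e f) HK Hbounded) as [x Hx].
  exists x. apply cauchy_cluster_converges; auto.
  intros eps Heps.
  destruct (archimed_cor1 eps Heps) as [[|j] [Hj Hj0]]; [lia|].
  destruct (injective_eventually_large s Hsinj (S j)) as [N HN].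
  exists N. intros k n Hkn. replace n with (k + (n - k))%nat by lia.
  rewrite Htail. eapply Rlt_trans; [apply (filt_small _ _ Hfilt j)|exact Hj].
  apply filtration_tail; auto. intros i Hi. apply HN. lia.
Qed.

Lemma filtration_infinite : ~ finite_set (fun x => exists j, x = h j).
Proof.
  intros [l Hl].
  assert (Hlen := NoDup_incl_length (l := map h (seq 0 (S (length l)))) (l' := l)).
  rewrite length_map, length_seq in Hlen.
  enough (S (length l) <= length l)%nat by lia.
  apply Hlen.
  - apply Injective_map_NoDup; [exact filtration_injective|apply seq_NoDup].
  - intros y Hy. apply in_map_iff in Hy. destruct Hy as [i [<- _]]. apply Hl. eauto.
Qed.

End Filtration.

Section NotNSS.
Hypothesis HnNSS : ~ NSS mul inv e opn.

Lemma small_nontrivial_cyclic U : opn U -> U e ->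
  exists h, h <> e /\ forall z, U (zpow h z).
Proof.
  intros HU He. apply NNPP. intro Hn. apply HnNSS.
  exists U. split; [exists U; auto|].
  apply no_subgroup_iff_no_cyclic; [exact Hg|].
  intros h Hh. apply NNPP. intro Hne. apply Hn. eauto.
Qed.

Definition stage (s : (G -> Prop) * G) : Prop :=
  opn (fst s) /\ fst s e /\ snd s <> e /\ forall z, fst s (zpow (snd s) z).

Definition refines (n : nat) (s s' : (G -> Prop) * G) : Prop :=
  (forall a b c, fst s' a -> fst s' b -> fst s' c -> fst s (mul a (mul b c))) /\
  (forall y, fst s' y -> d e y < d e (snd s) /\ d e y < / INR (S n)).

(* Every stage can be refined, because below any neighbourhood of e there is a
   nontrivial cyclic group. *)
Lemma refine_step n s : stage s -> exists s', stage s' /\ refines n s s'.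
Proof.
  destruct s as [U h]. intros [HU [He [Hh _]]]. simpl in *.
  destruct (cube_nbhd U HU He) as [U1 [HU1 [HU1e Hcube]]].
  set (U' := fun y => (U1 y /\ d e y < d e h) /\ d e y < / INR (S n)).
  assert (Hd0 : d e e = 0) by (apply Hd; auto).
  assert (HU' : opn U') by (repeat apply open_and; auto using ball_open).
  assert (HU'e : U' e).
  { unfold U'. rewrite Hd0. repeat split; auto.
    - destruct Hd as [Hpos [Hzero _]]. destruct (Hpos e h) as [|E]; auto.
      exfalso. apply Hh. symmetry. apply Hzero. auto.
    - apply Rinv_0_lt_compat, lt_0_INR. lia. }
  destruct (small_nontrivial_cyclic U' HU' HU'e) as [h' [Hh' Hpow]].
  exists (U', h'). unfold stage, refines. simpl.
  split; [split; [|split; [|split]]; auto|split].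
  - intros a b c [[Ha _] _] [[Hb _] _] [[Hc _] _]. auto.
  - intros y [[_ Hy1] Hy2]. auto.
Qed.

Lemma filtration_exists W0 : opn W0 -> W0 e ->
  exists W h, filtration W h /\ W 0%nat = W0.
Proof.
  intros HW0 HW0e.
  assert (Hstep : forall p : nat * ((G -> Prop) * G),
    exists s', stage (snd p) -> stage s' /\ refines (fst p) (snd p) s').
  { intros [n s]. destruct (classic (stage s)) as [Hs|Hs].
    - destruct (refine_step n s Hs) as [s' Hs']. eauto.
    - exists s. intro; contradiction. }
  destruct (choice _ Hstep) as [F HF].
  destruct (small_nontrivial_cyclic W0 HW0 HW0e) as [h0 [Hh0 Hpow0]].
  set (T := fix T n := match n with O => (W0, h0) | S n => F (n, T n) end).
  assert (Hstage : forall n, stage (T n)).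
  { induction n as [|n IH]; [repeat split; auto|apply (HF (n, T n)), IH]. }
  assert (Href : forall n, refines n (T n) (T (S n))).
  { intro n. apply (HF (n, T n)), Hstage. }
  exists (fun n => fst (T n)), (fun n => snd (T (S n))). split; [|reflexivity].
  constructor.
  - intro n. apply Hstage.
  - intro n. apply Href.
  - intros n y Hy. apply (Href n), Hy.
  - intros n y Hy. apply (Href (S n)), Hy.
  - intro n. apply (Hstage (S n)).
Qed.

End NotNSS.
End Metric.

Theorem TAP_NSS : metrizable opn -> locally_compact opn ->
  TAP mul inv e opn -> NSS mul inv e opn.
Proof.
  intros [d [Hd Hmo]] Hlc HTAP. apply NNPP. intro HnNSS.
  destruct (Hlc e) as [K [HK [W0 [HW0 [HW0e HW0K]]]]].
  destruct (filtration_exists d Hd Hmo HnNSS W0 HW0 HW0e) as [W [h [Hfilt HW]]].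
  subst W0.
  apply (filtration_infinite d W h Hfilt).
  apply HTAP, (filtration_absolutely_productive d Hmo W h K Hfilt HK HW0K).
Qed.

End TopologicalGroup.

Theorem corollary5p6 (G : Type) (mul : G -> G -> G) (inv : G -> G) (e : G)
    (opn : (G -> Prop) -> Prop)
    (Htg : is_topological_group mul inv e opn)
    (Hmet : metrizable opn)
    (Hlc : locally_compact opn) :
  NSS mul inv e opn <-> TAP mul inv e opn.
Proof.
  split.
  - apply NSS_TAP, Htg.
  - apply TAP_NSS; assumption.
Qed.
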